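(* Let $R$ be a ring and $I$ an ideal of $R$ with $I\subseteq P(R)$. If $R/I$ is almost Armendariz, then $R$ is almost Armendariz.
   Context: All rings are associative with identity. For a ring $R$, $P(R)$ denotes the prime radical of $R$ (the intersection of all prime ideals of $R$, equivalently the set of strongly nilpotent elements of $R$). A ring $R$ is called almost Armendariz if whenever $f(x)=\sum_{i=0}^m a_ix^i$ and $g(x)=\sum_{j=0}^n b_jx^j\in R[x]$ satisfy $f(x)g(x)=0$, then $a_ib_j\in P(R)$ for all $0\le i\le m$, $0\le j\le n$. *)

From HB Require Import structures.
From mathcomp Require Import all_boot all_order all_algebra.
Set Implicit Arguments. Unset Strict Implicit. Unset Printing Implicit Defensive.
Import GRing.Theory.
Local Open Scope ring_scope.

Definition is_ideal (R : nzRingType) (I : R -> Prop) : Prop :=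
  [/\ I 0,
      (forall x y, I x -> I y -> I (x + y)),
      (forall x, I x -> I (- x)),
      (forall r x, I x -> I (r * x)) &
      (forall r x, I x -> I (x * r))].

Definition is_prime_ideal (R : nzRingType) (P : R -> Prop) : Prop :=
  [/\ is_ideal P, ~ P 1 &
      (forall a b, (forall r, P (a * r * b)) -> P a \/ P b)].

Definition prime_radical (R : nzRingType) (x : R) : Prop :=
  forall P : R -> Prop, is_prime_ideal P -> P x.

Definition almost_armendariz (R : nzRingType) : Prop :=
  forall f g : {poly R}, f * g = 0 ->
    forall i j : nat, prime_radical (f`_i * g`_j).

(* If P is a prime ideal of R, then it contains I, so its image under the
   projection R -> R/I is a prime ideal of R/I whose preimage is P again.
   Hence the prime radical of R is the preimage of that of R/I.  Mapping a
   relation f g = 0 in R[x] to (R/I)[x] puts every product of coefficients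
   into P(R/I), and pulling back gives membership in P(R). *)
From HB Require Import structures.
From mathcomp Require Import all_boot all_order all_algebra.
Local Open Scope ring_scope.
Import GRing.Theory.

Section ImageOfPrimeIdeal.

Variables (R S : nzRingType) (pi : {rmorphism R -> S}).
Hypothesis pi_surj : forall s : S, exists x : R, pi x = s.

Definition image_pred (P : R -> Prop) (s : S) : Prop := exists x, pi x = s /\ P x.

Lemma image_pred_ideal {P : R -> Prop} : is_ideal P -> is_ideal (image_pred P).
Proof.
case=> P0 PD PN PL PR; split.
- by exists 0; rewrite rmorph0.
- by move=> _ _ [x [<- Px]] [y [<- Py]]; exists (x + y); rewrite rmorphD; auto.
- by move=> _ [x [<- Px]]; exists (- x); rewrite rmorphN; auto.
- move=> r _ [x [<- Px]]; have [r' <-] := pi_surj r.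
  by exists (r' * x); rewrite rmorphM; auto.
- move=> r _ [x [<- Px]]; have [r' <-] := pi_surj r.
  by exists (x * r'); rewrite rmorphM; auto.
Qed.

Lemma image_predK {P : R -> Prop} :
  is_ideal P -> (forall x, pi x = 0 -> P x) ->
  forall x, image_pred P (pi x) -> P x.
Proof.
case=> _ PD _ _ _ ker_P x [y [pi_xy Py]].
have /ker_P Pxy : pi (x - y) = 0 by rewrite rmorphB pi_xy subrr.
by rewrite -(subrK y x); apply: PD.
Qed.

Lemma image_prime_ideal {P : R -> Prop} :
  is_prime_ideal P -> (forall x, pi x = 0 -> P x) ->
  is_prime_ideal (image_pred P).
Proof.
move=> [P_ideal P1 P_prime] ker_P; have PK := image_predK P_ideal ker_P.
split; first exact: image_pred_ideal.
- by move=> S1; apply: P1; apply: PK; rewrite rmorph1.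
- move=> a b; have [a' <-] := pi_surj a; have [b' <-] := pi_surj b => aSb.
  have [Pa|Pb] : P a' \/ P b'.
    by apply: P_prime => r; apply: PK; rewrite !rmorphM.
  + by left; exists a'.
  + by right; exists b'.
Qed.

Lemma prime_radical_preim :
  (forall x, pi x = 0 -> prime_radical x) ->
  forall x, prime_radical (pi x) -> prime_radical x.
Proof.
move=> ker_rad x rad_pix P P_prime.
have ker_P x' : pi x' = 0 -> P x' by move/ker_rad; apply.
have [P_ideal _ _] := P_prime.
exact: image_predK P_ideal ker_P x (rad_pix _ (image_prime_ideal P_prime ker_P)).
Qed.

End ImageOfPrimeIdeal.

Theorem proposition2p4 (R : nzRingType) (I : R -> Prop)
  (S : nzRingType) (pi : {rmorphism R -> S}) :
  is_ideal I ->
  (forall x, I x -> prime_radical x) ->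
  (forall s : S, exists x : R, pi x = s) ->
  (forall x : R, pi x = 0 <-> I x) ->
  almost_armendariz S ->
  almost_armendariz R.
Proof.
move=> _ I_rad pi_surj ker_pi S_arm f g fg0 i j.
apply: (@prime_radical_preim _ _ pi pi_surj) => [x /ker_pi/I_rad //|].
rewrite rmorphM -!coef_map; apply: S_arm.
by rewrite -rmorphM fg0 rmorph0.
Qed.
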